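(* Let $n\ge 1$, let $C_u(v_1),\ldots,C_u(v_n)>0$ and $R_1,\ldots,R_n>0$ be sustainable, i.e. $R_i\le C_u(v_i)$ for all $i$, $\sum_{j\ne i}R_j\le C_d(v_i)$ for all $i$ (for some downlink capacities $C_d(v_i)>0$), and $(n-1)\sum_{i=1}^n R_i\le\sum_{i=1}^n C_u(v_i)$. Then the output $r_{i,j}$ of the algorithm described in the context satisfies the Uplink Capacity Constraint: for every $1\le k\le n$, $$\sum_{j=1}^n r_{k,j} + (n-2)\sum_{i=1}^n r_{i,k} \leq C_u(v_k),$$ i.e. the aggregate uplink rate used by $v_k$ under the two-level broadcast trees described in the context is at most $C_u(v_k)$.
   Context: Sub-stream rate assigning algorithm. Input: $n$, uplink capacities $C_u(v_1),\ldots,C_u(v_n)$ and rates $R_1,\ldots,R_n$. Initialize $r_{i,j}:=0$ for all $1\le i,j\le n$ and $U_i := C_u(v_i)-R_i$ for $1\le i\le n$. Outer loop: for $i=1$ to $n$: set $R'_i := R_i$; inner loop: for $j=1$ to $n$: if $(n-2)R'_i > U_j$ then set $r_{i,j} := U_j/(n-2)$, else set $r_{i,j} := R'_i$; then set $U_j := U_j-(n-2)r_{i,j}$ and $R'_i := R'_i - r_{i,j}$; if $R'_i = 0$, exit the inner loop. Output all $r_{i,j}$. Interpretation: $r_{i,j}$ is the rate of the sub-stream $s_{i,j}$ of site $v_i$'s data stream. Sub-stream $s_{i,i}$ is sent by $v_i$ directly to all $n-1$ other sites (using $(n-1)r_{i,i}$ of $v_i$'s uplink); for $j\neq i$, sub-stream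 $s_{i,j}$ is sent from $v_i$ to $v_j$ (using $r_{i,j}$ of $v_i$'s uplink), and $v_j$ forwards it to the remaining $n-2$ sites (using $(n-2)r_{i,j}$ of $v_j$'s uplink). Hence the total uplink rate used by $v_k$ is $\sum_{j} r_{k,j} + (n-2)\sum_i r_{i,k}$. *)

From mathcomp Require Import all_boot all_order all_algebra.
Set Implicit Arguments. Unset Strict Implicit. Unset Printing Implicit Defensive.
Import Order.TTheory GRing.Theory Num.Theory.
Local Open Scope ring_scope.

(* Sub-stream rate assigning algorithm, sites indexed by 'I_n
   (site v_{k+1} of the paper is index k : 'I_n). *)
Section Algo.
Variables (R : realFieldType) (n : nat).

(* the real number n - 2 (may be -1 or 0 for n = 1, 2) *)
Definition nm2 : R := n%:R - 2.

Definition upd_U (U : 'I_n -> R) (j : 'I_n) (v : R) : 'I_n -> R :=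
  fun k => if k == j then v else U k.

Definition upd_r (r : 'I_n -> 'I_n -> R) (i j : 'I_n) (v : R)
  : 'I_n -> 'I_n -> R :=
  fun a b => if (a == i) && (b == j) then v else r a b.

Fixpoint inner_loop (i : 'I_n) (Rp : R) (js : seq 'I_n)
    (U : 'I_n -> R) (r : 'I_n -> 'I_n -> R)
    : ('I_n -> R) * ('I_n -> 'I_n -> R) :=
  match js with
  | [::] => (U, r)
  | j :: js' =>
      let rij := if nm2 * Rp > U j then U j / nm2 else Rp in
      let U' := upd_U U j (U j - nm2 * rij) in
      let r' := upd_r r i j rij in
      let Rp' := Rp - rij in
      if Rp' == 0 then (U', r') else inner_loop i Rp' js' U' r'
  end.

Definition outer_step (Rr : 'I_n -> R)
    (st : ('I_n -> R) * ('I_n -> 'I_n -> R)) (i : 'I_n) :=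
  inner_loop i (Rr i) (enum 'I_n) st.1 st.2.

Definition substream_rates (Cu Rr : 'I_n -> R) : 'I_n -> 'I_n -> R :=
  (foldl (outer_step Rr) ((fun k => Cu k - Rr k), (fun _ _ => 0))
         (enum 'I_n)).2.

End Algo.

From mathcomp Require Import all_boot all_order all_algebra.
From mathcomp Require Import ring lra.
Set Implicit Arguments. Unset Strict Implicit. Unset Printing Implicit Defensive.
Import Order.TTheory GRing.Theory Num.Theory.
Local Open Scope ring_scope.

(* Each step of the inner loop charges (n-2) r_{i,j} to the residual uplink
   U_j and never drives it below zero, so throughout the algorithm
   U_k + (n-2) sum_i r_{i,k} = C_u(v_k) - R_k with U_k >= 0.  Moreover R'_i
   never drops below zero, so sum_j r_{k,j} <= R_k.  Adding the two bounds
   gives sum_j r_{k,j} + (n-2) sum_i r_{i,k} <= C_u(v_k). *)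

Definition assigned_rate (R : realFieldType) (c Rp Uj : R) : R :=
  if c * Rp > Uj then Uj / c else Rp.

Lemma assigned_rate_bounds (R : realFieldType) (c Rp Uj : R) :
  0 <= Uj -> 0 <= Rp ->
  c * assigned_rate c Rp Uj <= Uj /\ assigned_rate c Rp Uj <= Rp.
Proof.
rewrite /assigned_rate => Uj_ge0 Rp_ge0; case: ifP => [over|]; last first.
  by move/negbT; rewrite -leNgt => fits; split.
have c_neq0 : c != 0 by apply: contraTneq over => ->; rewrite mul0r -leNgt.
have cE : c * (Uj / c) = Uj by rewrite mulrC divfK.
split; first by rewrite cE.
by move: over; rewrite -{1}cE => over; nra.
Qed.

Section SubstreamRates.
Variables (R : realFieldType) (n : nat).
Local Notation m := (nm2 R n).
Local Notation state := (('I_n -> R) * ('I_n -> 'I_n -> R))%type.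
Implicit Types (U Cu Rr : 'I_n -> R) (r : 'I_n -> 'I_n -> R) (st : state).

Definition row_sum r (a : 'I_n) : R := \sum_(b < n) r a b.
Definition col_sum r (b : 'I_n) : R := \sum_(a < n) r a b.

Lemma row_sum_upd_r r i j v :
  row_sum (upd_r r i j v) i = row_sum r i + (v - r i j).
Proof.
rewrite /row_sum (bigD1 j) //= [in RHS](bigD1 j) //= /upd_r !eqxx /=.
under eq_bigr => b /negbTE bj do rewrite bj.
ring.
Qed.

Lemma col_sum_upd_r r i j v k :
  col_sum (upd_r r i j v) k = col_sum r k + (if k == j then v - r i j else 0).
Proof.
rewrite /col_sum (bigD1 i) //= [in RHS](bigD1 i) //= /upd_r eqxx /=.
under eq_bigr => a /negbTE ai do rewrite ai.
by case: eqP => [->|_]; ring.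
Qed.

Lemma upd_r_other_row r i j v a b : a != i -> upd_r r i j v a b = r a b.
Proof. by rewrite /upd_r => /negbTE ->. Qed.

Lemma upd_r_fresh r i j js v :
  j \notin js -> (forall b, b \in j :: js -> r i b = 0) ->
  forall b, b \in js -> upd_r r i j v i b = 0.
Proof.
move=> jNjs r_i0 b b_js; rewrite /upd_r eqxx /=.
case: eqP => [bj | _]; first by move: jNjs; rewrite -bj b_js.
by apply: r_i0; rewrite in_cons b_js orbT.
Qed.

Lemma upd_U_charge_ge0 U j Rp :
  (forall k, 0 <= U k) -> 0 <= Rp ->
  forall k, 0 <= upd_U U j (U j - m * assigned_rate m Rp (U j)) k.
Proof.
move=> U_ge0 Rp_ge0 k; have [fits _] := assigned_rate_bounds m (U_ge0 j) Rp_ge0.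
by rewrite /upd_U; case: eqP => _; rewrite ?subr_ge0.
Qed.

Lemma inner_loop_other_row i Rp js U r a b : a != i ->
  (inner_loop i Rp js U r).2 a b = r a b.
Proof.
move=> ai; elim: js Rp U r => [|j js IH] Rp U r //=.
by case: ifP => _ /=; rewrite ?IH upd_r_other_row.
Qed.

Lemma inner_loop_residual_ge0 i Rp js U :
  (forall k, 0 <= U k) -> 0 <= Rp ->
  forall r k, 0 <= (inner_loop i Rp js U r).1 k.
Proof.
elim: js Rp U => [|j js IH] Rp U U_ge0 Rp_ge0 r k //=.
rewrite -/(assigned_rate m Rp (U j)).
have [_ le_Rp] := assigned_rate_bounds m (U_ge0 j) Rp_ge0.
have U'_ge0 := upd_U_charge_ge0 j U_ge0 Rp_ge0.
by case: ifP => _ /=; last apply: IH; rewrite ?subr_ge0.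
Qed.

Lemma inner_loop_budget i Rp js U r k :
  uniq js -> (forall b, b \in js -> r i b = 0) ->
  let st := inner_loop i Rp js U r in
  st.1 k + m * col_sum st.2 k = U k + m * col_sum r k.
Proof.
elim: js Rp U r => [|j js IH] Rp U r //= /andP[jNjs js_uniq] r_i0.
rewrite -/(assigned_rate m Rp (U j)); set rij := assigned_rate _ _ _.
have step : upd_U U j (U j - m * rij) k + m * col_sum (upd_r r i j rij) k
            = U k + m * col_sum r k.
  rewrite col_sum_upd_r r_i0 ?mem_head // /upd_U.
  by case: eqP => [->|_]; ring.
case: ifP => _ //.
by rewrite IH // => b; apply: upd_r_fresh.
Qed.

Lemma inner_loop_row_sum i Rp js U r :
  uniq js -> (forall b, b \in js -> r i b = 0) ->
  (forall k, 0 <= U k) -> 0 <= Rp ->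
  row_sum (inner_loop i Rp js U r).2 i <= row_sum r i + Rp.
Proof.
elim: js Rp U r => [|j js IH] Rp U r /=; first by move=> _ _ _; rewrite lerDl.
move=> /andP[jNjs js_uniq] r_i0 U_ge0 Rp_ge0.
rewrite -/(assigned_rate m Rp (U j)).
have [_ le_Rp] := assigned_rate_bounds m (U_ge0 j) Rp_ge0.
set rij := assigned_rate _ _ _ in le_Rp *.
have row' : row_sum (upd_r r i j rij) i = row_sum r i + rij.
  by rewrite row_sum_upd_r r_i0 ?mem_head // subr0.
case: ifP => _ /=; first by rewrite row' lerD2l.
apply: le_trans (IH _ _ _ js_uniq _ _ _) _.
- exact: upd_r_fresh.
- exact: upd_U_charge_ge0.
- by rewrite subr_ge0.
- by rewrite row'; lra.
Qed.

(* [s] lists the sites whose outer iteration is still pending. *)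
Definition loop_invariant Cu Rr (s : seq 'I_n) st : Prop :=
  forall k, [/\ 0 <= st.1 k,
    st.1 k + m * col_sum st.2 k = Cu k - Rr k,
    k \in s -> forall b, st.2 k b = 0 &
    k \notin s -> row_sum st.2 k <= Rr k].

Lemma loop_invariant_init Cu Rr : (forall k, Rr k <= Cu k) ->
  loop_invariant Cu Rr (enum 'I_n) ((fun k => Cu k - Rr k), (fun _ _ => 0)).
Proof.
move=> Rr_le_Cu k; split=> //=; first by rewrite subr_ge0.
  by rewrite /col_sum big1 // mulr0 addr0.
by rewrite mem_enum.
Qed.

Lemma outer_step_invariant Cu Rr i s st :
  (forall k, 0 <= Rr k) -> i \notin s ->
  loop_invariant Cu Rr (i :: s) st ->
  loop_invariant Cu Rr s (outer_step Rr st i).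
Proof.
move=> Rr_ge0 iNs inv k; rewrite /outer_step.
have U_ge0 k' : 0 <= st.1 k' by case: (inv k').
have row_i0 b : b \in enum 'I_n -> st.2 i b = 0.
  by move=> _; case: (inv i) => _ _ /(_ (mem_head _ _)).
have [_ budget_k pending_k processed_k] := inv k.
split.
- exact: inner_loop_residual_ge0.
- by rewrite inner_loop_budget ?enum_uniq.
- move=> k_s b; have ki : k != i by apply: contraNneq iNs => <-.
  by rewrite inner_loop_other_row // pending_k // in_cons k_s orbT.
- move=> kNs; have [->|ki] := eqVneq k i.
    have row_i_zero : row_sum st.2 i = 0.
      by rewrite /row_sum big1 // => b _; rewrite row_i0 ?mem_enum.
    apply: le_trans (inner_loop_row_sum _ _ _ _) _ => //; first exact: enum_uniq.
    by rewrite row_i_zero add0r.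
  rewrite /row_sum; under eq_bigr => b _ do rewrite inner_loop_other_row //.
  by apply: processed_k; rewrite in_cons negb_or ki.
Qed.

Lemma foldl_outer_step_invariant Cu Rr s st :
  (forall k, 0 <= Rr k) -> uniq s -> loop_invariant Cu Rr s st ->
  loop_invariant Cu Rr [::] (foldl (outer_step Rr) st s).
Proof.
move=> Rr_ge0; elim: s st => [|i s IH] st //= /andP[iNs s_uniq] inv.
exact/IH/outer_step_invariant.
Qed.

Lemma substream_rates_uplink Cu Rr k :
  (forall k, 0 <= Rr k) -> (forall k, Rr k <= Cu k) ->
  row_sum (substream_rates Cu Rr) k + m * col_sum (substream_rates Cu Rr) k
    <= Cu k.
Proof.
move=> Rr_ge0 Rr_le_Cu.
have := foldl_outer_step_invariant Rr_ge0 (enum_uniq _) (loop_invariant_init Rr_le_Cu).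
move=> /(_ k) [U_ge0 budget _ /(_ isT) row_le]; rewrite /substream_rates.
lra.
Qed.

End SubstreamRates.

(* Only R_k >= 0 and R_k <= C_u(v_k) are needed. *)
Theorem propositionB5 (R : realFieldType) (n : nat) (Cu Cd Rr : 'I_n -> R) :
  (0 < n)%N ->
  (forall k, 0 < Cu k) ->
  (forall k, 0 < Cd k) ->
  (forall k, 0 < Rr k) ->
  (forall k, Rr k <= Cu k) ->
  (forall i, \sum_(j < n | j != i) Rr j <= Cd i) ->
  (n%:R - 1) * \sum_(i < n) Rr i <= \sum_(i < n) Cu i ->
  forall k : 'I_n,
    \sum_(j < n) substream_rates Cu Rr k j
      + (n%:R - 2) * \sum_(i < n) substream_rates Cu Rr i k <= Cu k.
Proof.
move=> _ _ _ Rr_gt0 Rr_le_Cu _ _ k.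
by apply: substream_rates_uplink => // k'; apply: ltW.
Qed.
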